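(* Let $z_1,\dots,z_n\in\mathbb{Q}[\mathbf{i}]$ (not necessarily distinct) be nonzero and satisfy $|z_j|=|z_k|$ for all $j,k\in[n]$. Write $n=2^s m$ with $s\in\mathbb{Z}_{\ge0}$ and $m$ odd. Then there exists $j\in\{0,1,\dots,s\}$ such that $\sum_{k=1}^n z_k^{2^j}\neq 0$.
   Context: $\mathbb{Q}[\mathbf{i}]=\{x+y\mathbf{i}: x,y\in\mathbb{Q}\}$, $[n]=\{1,\dots,n\}$. (In the paper's notation the quantity $\sum_k z_k^{p}$ is the complex moment $M_p(S)$ of $S=\{z_1,\dots,z_n\}$.) *)

From mathcomp Require Import all_boot all_order all_algebra all_field.
Set Implicit Arguments. Unset Strict Implicit. Unset Printing Implicit Defensive.
Import Order.TTheory GRing.Theory Num.Theory.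
Local Open Scope ring_scope.

Definition gaussQ : pred algC := fun z => ('Re z \in Crat) && ('Im z \in Crat).

Definition moment (n p : nat) (z : 'I_n -> algC) : algC := \sum_(k < n) z k ^+ p.

From HB Require Import structures.
From mathcomp Require Import all_boot all_order all_algebra all_field.
From mathcomp Require Import zify ring.
Import Order.TTheory GRing.Theory Num.Theory.
Local Open Scope ring_scope.

(* After clearing denominators the z_k are Gaussian integers of a common
   norm 2^e r with r odd.  Since 1 + i is the prime above 2, each z_k is
   (1 + i)^e w_k with w_k == 1 mod (1 + i), and the power sums of the z_k and
   of the w_k differ by a nonzero factor.  Such a w satisfies
   w^2 == 2 Re w - 1 mod 4 and w^4 == 1 mod 8, hence w^(2^j) == 1 mod 2^(j+1)
   for j >= 2.  Write n = 2^s m.  If s = 0, then sum w == n, which is not 0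
   mod (1 + i).  If s = 1 and sum w = 0, then sum w^2 == 2 Re (sum w) - n = -n,
   which is not 0 mod 4.  If s >= 2, then sum w^(2^s) == n, which is not 0
   mod 2^(s+1). *)

Definition gaussZ : {pred algC} :=
  [pred z | ('Re z \is a Num.int) && ('Im z \is a Num.int)].

Lemma gaussZ_rect x y :
  x \is a Num.int -> y \is a Num.int -> x + 'i * y \in gaussZ.
Proof. by move=> xZ yZ; rewrite inE Re_rect ?Im_rect ?Rreal_int ?xZ ?yZ. Qed.

Lemma intr_gaussZ x : x \is a Num.int -> x \in gaussZ.
Proof. by move=> xZ; rewrite -[x]addr0 -[0](mulr0 'i) gaussZ_rect. Qed.

Lemma gaussZ_subring_closed : subring_closed gaussZ.
Proof.
split=> [|x y /andP[xR xI] /andP[yR yI]|x y /andP[xR xI] /andP[yR yI]].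
- exact/intr_gaussZ/rpred1.
- by rewrite inE !raddfB /= !rpredB.
- by rewrite inE ReM ImM rpredB ?rpredD ?rpredM.
Qed.

HB.instance Definition _ :=
  GRing.isSubringClosed.Build algC gaussZ gaussZ_subring_closed.

Lemma gaussZ_i : 'i \in gaussZ.
Proof. by rewrite -['i]add0r -['i]mulr1 gaussZ_rect ?rpred0 ?rpred1. Qed.

Lemma gaussZ_Re {z} : z \in gaussZ -> 'Re z \is a Num.int.
Proof. by case/andP. Qed.

Lemma gaussZ_normC2 {z} : z \in gaussZ -> `|z| ^+ 2 \is a Num.nat.
Proof.
case/andP=> zR zI.
by rewrite -intrEge0 ?exprn_ge0 // normC2_Re_Im rpredD ?rpredX.
Qed.

Lemma intr_bin2 (x : algC) :
  x \is a Num.int -> x * (x - 1) / 2 \is a Num.int.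
Proof.
case/intrP=> m ->.
have [t mm1] : exists t, m * (m - 1) = 2 * t.
  have mE := divz_eq m 2; set q := (m %/ 2)%Z in mE.
  have [r|r] : (m %% 2 = 0 \/ m %% 2 = 1)%Z by lia.
    by rewrite r in mE; rewrite mE; exists (q * (2 * q - 1)); ring.
  by rewrite r in mE; rewrite mE; exists (q * (2 * q + 1)); ring.
suff -> : m%:~R * (m%:~R - 1) / 2 = t%:~R :> algC by exact: intr_int.
by rewrite -(intrB _ m 1) -intrM mm1 intrM mulrAC mulfV ?mul1r // pnatr_eq0.
Qed.

(* Congruence in Z[i]; for d = 0 it holds trivially, as x / 0 = 0. *)
Notation "u == v %[gmod d ]" := ((u - v) / d \in gaussZ)
  (at level 70, v at next level, format "u  ==  v  %[gmod  d ]").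

Implicit Types (d u v w c : algC).

Lemma gmod_trans {d u v w} :
  u == v %[gmod d] -> v == w %[gmod d] -> u == w %[gmod d].
Proof. by move=> uv vw; rewrite -[u](subrK v) -addrA mulrDl rpredD. Qed.

Lemma gmod_sum {I : finType} {d} {u v : I -> algC} :
  (forall i, u i == v i %[gmod d]) -> \sum_i u i == \sum_i v i %[gmod d].
Proof. by move=> uv; rewrite -sumrB mulr_suml rpred_sum. Qed.

Lemma gmod_sqr {k c u} : (0 < k)%N -> c \in gaussZ ->
  u == c %[gmod 2 ^+ k] -> u ^+ 2 == c ^+ 2 %[gmod 2 ^+ k.+1].
Proof.
case: k => // k _ cZ ucZ.
have [y yZ ->] : exists2 y, y \in gaussZ & u = c + 2 ^+ k.+1 * y.
  exists ((u - c) / 2 ^+ k.+1) => //.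
  by rewrite mulrC divfK ?expf_neq0 ?pnatr_eq0 // addrC subrK.
have -> : ((c + 2 ^+ k.+1 * y) ^+ 2 - c ^+ 2) / 2 ^+ k.+2
    = c * y + 2 ^+ k * y ^+ 2.
  by rewrite !exprS; field; rewrite expf_neq0 ?pnatr_eq0.
by rewrite rpredD ?rpredM ?rpredX ?rpred_nat.
Qed.

Lemma gmod_pow2 {k c u} j : (0 < k)%N -> c \in gaussZ ->
  u == c %[gmod 2 ^+ k] -> u ^+ (2 ^ j) == c ^+ (2 ^ j) %[gmod 2 ^+ (k + j)].
Proof.
move=> k_gt0 cZ; elim: j => [|j IH] ucZ; first by rewrite addn0.
by rewrite expnSr !exprM addnS gmod_sqr ?rpredX ?IH ?addn_gt0 ?k_gt0.
Qed.

Lemma mulCii : 'i * 'i = -1 :> algC.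
Proof. by rewrite -expr2 sqrCi. Qed.

Lemma normC2_1i : `|1 + 'i| ^+ 2 = 2 :> algC.
Proof. by rewrite -['i]mulr1 normC2_rect ?rpred1 // expr1n. Qed.

Lemma oneCi_neq0 : 1 + 'i != 0 :> algC.
Proof. by rewrite -normr_eq0 -sqrf_eq0 normC2_1i pnatr_eq0. Qed.

Lemma gaussZ_gmod1i {z r} : z \in gaussZ -> `|z| ^+ 2 = r%:R ->
  z == (odd r)%:R %[gmod 1 + 'i].
Proof.
case/andP=> aZ bZ; rewrite normC2_Re_Im => zr.
set a := 'Re z in aZ zr; set b := 'Im z in bZ zr; set e : algC := (odd r)%:R.
have pZ : (a + b - e) / 2 \is a Num.int.
  (* a + b = a^2 + b^2 = r mod 2 *)
  have hE : (r./2)%:R = (a ^+ 2 + b ^+ 2 - e) / 2.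
    rewrite zr -{2}[r]odd_double_half natrD -muln2 natrM addrC addKr.
    by rewrite mulfK ?pnatr_eq0.
  have -> : (a + b - e) / 2 = (r./2)%:R - a * (a - 1) / 2 - b * (b - 1) / 2.
    by rewrite hE; field.
  by rewrite !rpredB ?rpred_nat ?intr_bin2.
set p := (a + b - e) / 2 in pZ.
have -> : (z - e) / (1 + 'i) = p + 'i * (p - a + e).
  rewrite [z]Crect -/a -/b /p; field: mulCii; exact: oneCi_neq0.
by rewrite gaussZ_rect // rpredD ?rpredB ?rpred_nat.
Qed.

Lemma gmod1i_gaussZ {z} : z == 1 %[gmod 1 + 'i] -> z \in gaussZ.
Proof.
move=> z1; rewrite -[z](subrK 1) -[z - 1](divfK oneCi_neq0).
by rewrite rpredD ?rpred1 // rpredM // rpredD ?rpred1 ?gaussZ_i.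
Qed.

Lemma gmod1i_sqr {z} :
  z == 1 %[gmod 1 + 'i] -> z ^+ 2 == 2 * 'Re z - 1 %[gmod 2 ^+ 2].
Proof.
move=> /andP[pZ qZ].
set y := (z - 1) / _ in pZ qZ; set p := 'Re y in pZ; set q := 'Im y in qZ.
have zE : z = (1 + p - q) + 'i * (p + q).
  rewrite -[z](subrK 1) -[z - 1](divfK oneCi_neq0) -/y [y]Crect -/p -/q.
  by ring: mulCii.
have -> : 'Re z = 1 + p - q.
  by rewrite zE Re_rect // ?rpredB ?rpredD ?Rreal_int ?rpred1.
have -> : (z ^+ 2 - (2 * (1 + p - q) - 1)) / 2 ^+ 2
    = - (p * q) + 'i * (p * (p + q) - (p + q) * (p + q - 1) / 2).
  by rewrite zE; field: mulCii.
by rewrite gaussZ_rect ?rpredN ?rpredB ?intr_bin2 ?rpredM ?rpredD.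
Qed.

Lemma gmod1i_pow4 {z} : z == 1 %[gmod 1 + 'i] -> z ^+ 4 == 1 %[gmod 2 ^+ 3].
Proof.
move=> z1; have aZ := gaussZ_Re (gmod1i_gaussZ z1); set a := 'Re z in aZ.
have cZ : 2 * a - 1 \in gaussZ.
  by rewrite intr_gaussZ ?rpredB ?rpredM ?rpred_nat ?rpred1.
rewrite -[4%N]/(2 * 2)%N exprM.
apply: gmod_trans (@gmod_sqr 2 _ _ isT cZ (gmod1i_sqr z1)) _.
have -> : ((2 * a - 1) ^+ 2 - 1) / 2 ^+ 3 = a * (a - 1) / 2 by field.
exact/intr_gaussZ/intr_bin2.
Qed.

Lemma natr_div_pow2_int (R : archiNumFieldType) n k :
  n%:R / 2 ^+ k \is a @Num.int R -> (2 ^ k %| n)%N.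
Proof.
rewrite intrEge0 ?divr_ge0 ?exprn_ge0 ?ler0n // => /natrP[t tE].
apply/dvdnP; exists t; apply/eqP.
by rewrite -(eqr_nat R) natrM natrX -tE divfK ?expf_neq0 ?pnatr_eq0.
Qed.

Lemma natr_gmod_pow2 n k : n%:R / 2 ^+ k \in gaussZ -> (2 ^ k %| n)%N.
Proof.
move/gaussZ_Re; have /Creal_ReP -> : n%:R / 2 ^+ k \is @Num.real algC.
  by rewrite rpredM ?rpredV ?rpredX ?rpred_nat.
exact: natr_div_pow2_int.
Qed.

Lemma natr_gmod_1i n : n%:R / (1 + 'i) \in gaussZ -> (2 %| n)%N.
Proof.
have nR : (n%:R : algC) \is Num.real by rewrite rpred_nat.
(* 'Re (n / (1 + 'i)) = n / 2 *)
move/gaussZ_Re; rewrite Re_div normC2_1i raddfD /= Re_i (Creal_ReP _ (rpred1 _)).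
rewrite (Creal_ReP _ nR) (Creal_ImP _ nR) addr0 mulr1 mul0r addr0 -[2]expr1.
by move/natr_div_pow2_int; rewrite expn1.
Qed.

Lemma gmod_sum_eq0 {I : finType} {d} {u c : I -> algC} :
  (forall i, u i == c i %[gmod d]) -> \sum_i u i = 0 ->
  (\sum_i c i) / d \in gaussZ.
Proof. by move/gmod_sum => + S0; rewrite S0 sub0r mulNr rpredN. Qed.

Lemma pow2_odd_ndvd s m : odd m -> ~~ (2 ^ s.+1 %| 2 ^ s * m)%N.
Proof. by move=> m_odd; rewrite expnSr dvdn_pmul2l ?expn_gt0 // dvdn2 m_odd. Qed.

Lemma sum_pow2_gmod1i_neq0 {n} {w : 'I_n -> algC} {s m} :
  (forall k, w k == 1 %[gmod 1 + 'i]) -> odd m -> n = (2 ^ s * m)%N ->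
  exists j, (j <= s)%N /\ \sum_k w k ^+ (2 ^ j) != 0.
Proof.
move=> w1 m_odd nE; have := pow2_odd_ndvd s m m_odd; rewrite -nE.
have sum1 : \sum_(k < n) (1 : algC) = n%:R by rewrite sumr_const card_ord.
have sum_pow0 : \sum_k w k ^+ (2 ^ 0) = \sum_k w k.
  by apply: eq_bigr => k _; rewrite expn0 expr1.
case: s nE => [|[|s]] nE ndvd.
- exists 0%N; split=> //; rewrite sum_pow0; apply/eqP.
  by move/(gmod_sum_eq0 w1); rewrite sum1 => /natr_gmod_1i; apply/negP.
- have [S0|] := eqVneq (\sum_k w k) 0; last by exists 0%N; rewrite sum_pow0.
  exists 1%N; split=> //; apply/eqP.
  move/(gmod_sum_eq0 (fun k => gmod1i_sqr (w1 k))).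
  rewrite sumrB -mulr_sumr -raddf_sum S0 raddf0 mulr0 sub0r sum1 mulNr rpredN.
  by move/natr_gmod_pow2; apply/negP.
- exists s.+2; split=> //; apply/eqP.
  have pow k : w k ^+ (2 ^ s.+2) == 1 %[gmod 2 ^+ (3 + s)].
    have := @gmod_pow2 3 _ _ s isT (rpred1 _) (gmod1i_pow4 (w1 k)).
    by rewrite expr1n -exprM !expnS mulnA.
  move/(gmod_sum_eq0 pow); rewrite sum1 => /natr_gmod_pow2.
  by apply/negP.
Qed.

Lemma gaussZ_factor_1i {e r z} :
  z \in gaussZ -> `|z| ^+ 2 = (2 ^ e * r)%:R ->
  exists w, [/\ w \in gaussZ, `|w| ^+ 2 = r%:R & z = (1 + 'i) ^+ e * w].
Proof.
elim: e z => [|e IH] z zZ zr; first by exists z; rewrite mul1n mul1r in zr *.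
have := gaussZ_gmod1i zZ zr; rewrite oddM oddX /= subr0 => yZ.
have [|w [wZ wr yE]] := IH _ yZ.
  rewrite normf_div expr_div_n zr normC2_1i.
  by rewrite expnS -mulnA natrM mulrC mulKf ?pnatr_eq0.
by exists w; split=> //; rewrite exprS -mulrA -yE mulrC divfK ?oneCi_neq0.
Qed.

Lemma Crat_common_denom (s : seq algC) : {subset s <= Crat} ->
  exists2 D : int, D != 0 & {in s, forall x, D%:~R * x \is a Num.int}.
Proof.
elim: s => [|x s IH] sQ; first by exists 1.
have [|D D_neq0 DZ] := IH; first by move=> y ys; rewrite sQ // inE ys orbT.
have /CratP[a xE] := sQ x (mem_head x s).
exists (denq a * D); first by rewrite mulf_neq0 ?denq_neq0.
move=> y /predU1P[-> | ys]; rewrite intrM.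
  rewrite mulrAC xE -ratr_int -rmorphM /= [_ * a]mulrC -numqE ratr_int.
  by rewrite rpredM ?intr_int.
by rewrite -mulrA rpredM ?intr_int ?DZ.
Qed.

Lemma gaussQ_common_denom {I : finType} {z : I -> algC} :
  (forall i, z i \in gaussQ) ->
  exists2 D : int, D != 0 & forall i, D%:~R * z i \in gaussZ.
Proof.
move=> zQ; have [|D D_neq0 DZ] :=
  Crat_common_denom (map (@Re _) (codom z) ++ map (@Im _) (codom z)).
  move=> x; rewrite mem_cat => /orP[] /mapP[_ /codomP[i ->] ->];
  by case/andP: (zQ i).
exists D => // i; have DR : D%:~R \is @Num.real algC by rewrite Rreal_int ?intr_int.
by rewrite inE ReMl ?ImMl // !DZ // mem_cat map_f ?codom_f ?orbT.
Qed.

Theorem theorem1p5 (n : nat) (z : 'I_n -> algC)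
  (hQ : forall k, z k \in gaussQ)
  (hnz : forall k, z k != 0)
  (habs : forall j k, `|z j| = `|z k|)
  (s m : nat) (hm : odd m) (hn : n = (2 ^ s * m)%N) :
  exists j : nat, (j <= s)%N /\ \sum_(k < n) z k ^+ (2 ^ j) != 0.
Proof.
have [D D_neq0 DzZ] := gaussQ_common_denom hQ.
have n_gt0 : (0 < n)%N by rewrite hn muln_gt0 expn_gt0 (odd_gt0 hm).
pose k0 := Ordinal n_gt0.
have /natrP[N NE] := gaussZ_normC2 (DzZ k0).
have N_gt0 : (0 < N)%N.
  rewrite lt0n -(pnatr_eq0 algC) -NE sqrf_eq0 normr_eq0.
  by rewrite mulf_neq0 ?intr_eq0 ?hnz.
have [r r_odd Nr] := pfactor_coprime (isT : prime 2) N_gt0.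
rewrite coprime2n in r_odd; set e := logn 2 N in Nr.
have Dzr k : `|D%:~R * z k| ^+ 2 = (2 ^ e * r)%:R.
  by rewrite normrM (habs k k0) -normrM NE Nr mulnC.
have [w wP] := fin_all_exists (fun k => gaussZ_factor_1i (DzZ k) (Dzr k)).
have w1 k : w k == 1 %[gmod 1 + 'i].
  by case: (wP k) => wZ wr _; have := gaussZ_gmod1i wZ wr; rewrite r_odd.
have [j [j_le Sw]] := sum_pow2_gmod1i_neq0 w1 hm hn.
exists j; split=> //; apply: contraNneq Sw => Sz.
have : ((1 + 'i) ^+ e) ^+ (2 ^ j) * \sum_k w k ^+ (2 ^ j)
    = D%:~R ^+ (2 ^ j) * \sum_k z k ^+ (2 ^ j).
  rewrite !mulr_sumr; apply: eq_bigr => k _.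
  by rewrite -!exprMn; case: (wP k) => _ _ <-.
by rewrite Sz mulr0 => /eqP; rewrite mulf_eq0 !expf_eq0 (negPf oneCi_neq0) !andbF.
Qed.
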